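(* If a finite simple graph $G$ with an even number of vertices is H$_2$--cordial, then the number of edges of $G$ is even.
   Context: For a positive integer $k$, an H$_k$--cordial labeling of a graph $G$ is a map $f:E(G)\to\mathbb{Z}$ such that, defining $f(v)=\sum_{e\in I(v)} f(e)$ for each vertex $v$ (where $I(v)$ is the set of edges incident to $v$), we have $1\le |f(e)|\le k$ for every edge $e$, $1\le |f(v)|\le k$ for every vertex $v$, and for each $i$ with $1\le i\le k$, $|e_f(i)-e_f(-i)|\le 1$ and $|v_f(i)-v_f(-i)|\le 1$; here $e_f(c)$ is the number of edges with label $c$ and $v_f(c)$ the number of vertices $v$ with $f(v)=c$. A graph is H$_k$--cordial if it admits an H$_k$--cordial labeling. *)

From mathcomp Require Import all_boot all_order all_algebra.
Set Implicit Arguments. Unset Strict Implicit. Unset Printing Implicit Defensive.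
Import Order.TTheory GRing.Theory Num.Theory.
Local Open Scope ring_scope.

Definition simple_graph (V : finType) (e : rel V) : Prop :=
  symmetric e /\ irreflexive e.

Definition edges (V : finType) (e : rel V) : {set {set V}} :=
  [set E : {set V} | [exists x, exists y, e x y && (E == [set x; y])]].

Definition inc_edges (V : finType) (e : rel V) (v : V) : {set {set V}} :=
  [set E in edges e | v \in E].

Definition vlab (V : finType) (e : rel V) (f : {set V} -> int) (v : V) : int :=
  \sum_(E in inc_edges e v) f E.

Definition ecount (V : finType) (e : rel V) (f : {set V} -> int) (c : int) : nat :=
  #|[set E in edges e | f E == c]|.
Definition vcount (V : finType) (e : rel V) (f : {set V} -> int) (c : int) : nat :=
  #|[set v : V | vlab e f v == c]|.

(* H_k-cordial labeling (only values of f on edges matter) *)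
Definition Hk_cordial_labeling (k : nat) (V : finType) (e : rel V)
    (f : {set V} -> int) : Prop :=
  (forall E, E \in edges e -> 1 <= `|f E| <= k%:Z) /\
  (forall v : V, 1 <= `|vlab e f v| <= k%:Z) /\
  (forall i : nat, (1 <= i <= k)%N ->
     `|(ecount e f i%:Z)%:Z - (ecount e f (- i%:Z))%:Z| <= 1 /\
     `|(vcount e f i%:Z)%:Z - (vcount e f (- i%:Z))%:Z| <= 1).

Definition Hk_cordial (k : nat) (V : finType) (e : rel V) : Prop :=
  exists f : {set V} -> int, Hk_cordial_labeling k e f.

From mathcomp Require Import all_boot all_order all_algebra zify.
Import Order.TTheory GRing.Theory Num.Theory.
Local Open Scope ring_scope.

(* Write [e_j] and [v_j] for the numbers of edges and vertices labelled [j].  Every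
   edge label is counted at its two endpoints, so the vertex weight
   [(v_1 - v_-1) + 2 (v_2 - v_-2)] is twice the edge weight
   [(e_1 - e_-1) + 2 (e_2 - e_-2)].  Hence [v_1 - v_-1] is even, so it vanishes
   by cordiality; as [|V| = v_1 + v_-1 + v_2 + v_-2] is even, so is
   [v_2 - v_-2], which vanishes too.  The edge weight is then 0, which in turn
   forces [e_1 = e_-1] and [e_2 = e_-2], and [|E| = 2 (e_1 + e_2)]. *)

Definition level_count {T : finType} (A : {pred T}) (g : T -> int) (c : int) : nat :=
  #|[set x in A | g x == c]|.

Definition H2_weight (cnt : int -> nat) : int :=
  (cnt 1)%:Z - (cnt (-1))%:Z + 2 * ((cnt 2)%:Z - (cnt (-2))%:Z).

Definition H2_total (cnt : int -> nat) : nat :=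
  (cnt 1%R + cnt (-1)%R + cnt 2%R + cnt (-2)%R)%N.

Definition H2_balanced (cnt : int -> nat) : Prop :=
  `|(cnt 1)%:Z - (cnt (-1))%:Z| <= 1 /\ `|(cnt 2)%:Z - (cnt (-2))%:Z| <= 1.

Lemma H2_label_indicator (x : int) : 1 <= `|x| <= 2 ->
  x = (x == 1)%:R - (x == -1)%:R + 2 * ((x == 2)%:R - (x == -2)%:R).
Proof. by case: x => [[|[|[|n]]]|[|[|n]]]. Qed.

Lemma H2_label_cover (x : int) : 1 <= `|x| <= 2 ->
  ((x == 1%R) + (x == (-1)%R) + (x == 2%R) + (x == (-2)%R))%N = 1%N.
Proof. by case: x => [[|[|[|n]]]|[|[|n]]]. Qed.

Lemma sum_nat_indicator (T : finType) (A : {pred T}) (P : pred T) :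
  (\sum_(x in A) P x)%N = #|[set x in A | P x]|.
Proof.
by rewrite -sum1dep_card big_mkcondr; apply: eq_bigr => x _; case: (P x).
Qed.

Section H2Labels.

Context {T : finType} {A : {pred T}} {g : T -> int}.
Hypothesis g_H2 : {in A, forall x, 1 <= `|g x| <= 2}.

Lemma sum_H2_labels : \sum_(x in A) g x = H2_weight (level_count A g).
Proof.
rewrite /H2_weight /level_count -!sum_nat_indicator -!natz !natr_sum.
rewrite -!sumrB mulr_sumr -!big_split /=.
by apply: eq_bigr => x /g_H2 /H2_label_indicator.
Qed.

Lemma card_H2_labels : #|A| = H2_total (level_count A g).
Proof.
rewrite /H2_total /level_count -!sum_nat_indicator -!big_split /= -sum1_card.
by apply: eq_bigr => x /g_H2 /H2_label_cover.
Qed.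

End H2Labels.

Lemma sum_vlab (V : finType) (e : rel V) (f : {set V} -> int) : irreflexive e ->
  \sum_v vlab e f v = 2 * \sum_(E in edges e) f E.
Proof.
move=> e_irr; rewrite /vlab.
have inc_sum v : \sum_(E in inc_edges e v) f E =
    \sum_(E in edges e) (if v \in E then f E else 0).
  by rewrite -big_mkcondr; apply: eq_bigl => E; rewrite !inE.
under eq_bigr => v _ do rewrite inc_sum.
rewrite exchange_big /= mulr_sumr; apply: eq_bigr => E.
rewrite inE => /existsP [x /existsP [y /andP [exy /eqP ->]]].
have xy : x != y by apply: contraTneq exy => ->; rewrite e_irr.
by rewrite -big_mkcond /= sumr_const cards2 xy mulr2n mulrDl mul1r.
Qed.

Lemma H2_total_even {cE cV : int -> nat} :
  H2_balanced cE -> H2_balanced cV -> H2_weight cV = 2 * H2_weight cE ->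
  ~~ odd (H2_total cV) -> ~~ odd (H2_total cE).
Proof.
move=> [bE1 bE2] [bV1 bV2]; rewrite /H2_weight /H2_total => weight even_V.
have V1 : cV 1 = cV (-1) by lia.
have V2 : cV 2 = cV (-2) by lia.
have E1 : cE 1 = cE (-1) by lia.
have E2 : cE 2 = cE (-2) by lia.
lia.
Qed.

Theorem lemma3 (V : finType) (e : rel V) :
  simple_graph e -> ~~ odd #|V| -> Hk_cordial 2 e -> ~~ odd #|edges e|.
Proof.
move=> [_ e_irr] even_V [f [f_H2 [vlab_H2 balanced]]].
have vlab_H2' : {in predT, forall v, 1 <= `|vlab e f v| <= 2} by move=> v _.
have sumE : \sum_(E in edges e) f E = H2_weight (ecount e f) := sum_H2_labels f_H2.
have sumV : \sum_v vlab e f v = H2_weight (vcount e f) := sum_H2_labels vlab_H2'.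
have cardE : #|edges e| = H2_total (ecount e f) := card_H2_labels f_H2.
have cardV : #|V| = H2_total (vcount e f) := card_H2_labels vlab_H2'.
have balE : H2_balanced (ecount e f) := conj (balanced 1%N isT).1 (balanced 2%N isT).1.
have balV : H2_balanced (vcount e f) := conj (balanced 1%N isT).2 (balanced 2%N isT).2.
rewrite cardE; apply: (H2_total_even balE balV).
- by rewrite -sumV -sumE sum_vlab.
- by rewrite -cardV.
Qed.
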